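(* Let $(V_1,\dots,V_n)$ be an $n$-tuple of doubly non-commuting isometries on $H$ and let $T\in B(H)$ commute with the projections $V_i^kV_i^{*k}$ for all $i=1,\dots,n$ and all $k\ge1$ (equivalently, $V_i^k(H)$ reduces $T$ for all such $i,k$). Then for every (possibly empty) $A=\{i_1,\dots,i_l\}\subseteq\{1,\dots,n\}$, every subspace $V_{i_1}^{k_{i_1}}\cdots V_{i_l}^{k_{i_l}}(W_A)$ ($k_{i_1},\dots,k_{i_l}\ge0$) reduces $T$; in particular $W_A$ reduces $T$. Consequently $H_A$ reduces $T$.
   Context: Fix $n\ge1$ and $z_{ij}\in\mathbb T$ ($i\ne j$) with $z_{ji}=\overline{z_{ij}}$; $(V_1,\dots,V_n)$ is doubly non-commuting if the $V_i$ are isometries with $V_i^*V_j=\overline{z_{ij}}V_jV_i^*$ for $i\ne j$. For an isometry $S$: $H^{\mathrm{iso}}(S)=\bigoplus_{k\ge0}S^k(\ker S^* )$, $H^{\mathrm{uni}}(S)=\bigcap_{k\ge0}S^k(H)$. With $A^c$ the complement, $H_A=\bigcap_{i\in A}H^{\mathrm{iso}}(V_i)\cap\bigcap_{i\in A^c}H^{\mathrm{uni}}(V_i)$ (empty intersection $=H$) and $W_A=\bigcap_{(m_j)\in\mathbb N_0^{A^c}}\big(\prod_{j\in A^c}V_j^{m_j}\big)\big(\bigcap_{i\in A}\ker V_i^*\big)$ (empty intersection of kernels $=H$, empty product $=$ identity). It is known that $H_A=\bigoplus_{k}V_{i_1}^{k_{i_1}}\cdots V_{i_l}^{k_{i_l}}(W_A)$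 orthogonally. *)

From HB Require Import structures.
From mathcomp Require Import all_boot all_order all_algebra.
From mathcomp Require Import reals.
From mathcomp Require Import complex.
Set Implicit Arguments. Unset Strict Implicit. Unset Printing Implicit Defensive.
Import Order.TTheory GRing.Theory Num.Theory.
Local Open Scope ring_scope.

Section Hilbert.
Variable R : realType.
Local Notation C := (R[i]).
Variable H : lmodType C.
Variable ip : H -> H -> C.   (* inner product, linear in the first variable *)

Definition is_inner_product : Prop :=
  [/\ forall (a : C) x y z, ip (a *: x + y) z = a * ip x z + ip y z,
      forall x y, ip y x = (ip x y)^*,
      forall x, 0 <= ip x x
    & forall x, ip x x = 0 -> x = 0].

Definition dist2 (x y : H) : C := ip (x - y) (x - y).

Definition cauchy_seq (u : nat -> H) : Prop :=
  forall e : C, 0 < e -> exists N, forall m k, (N <= m)%N -> (N <= k)%N ->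
    dist2 (u m) (u k) < e.

Definition converges_to (u : nat -> H) (x : H) : Prop :=
  forall e : C, 0 < e -> exists N, forall m, (N <= m)%N -> dist2 (u m) x < e.

Definition is_hilbert : Prop :=
  is_inner_product /\ forall u, cauchy_seq u -> exists x, converges_to u x.

Definition bounded_op (T : H -> H) : Prop :=
  linear T /\ exists M : C, forall x, ip (T x) (T x) <= M * ip x x.

Definition is_adjoint (T Ts : H -> H) : Prop :=
  forall x y, ip (T x) y = ip x (Ts y).

Definition isometry (V : H -> H) : Prop :=
  bounded_op V /\ forall x y, ip (V x) (V y) = ip x y.

Definition himage (f : H -> H) (M : H -> Prop) : H -> Prop :=
  fun y => exists x, M x /\ y = f x.
Definition hkernel (f : H -> H) : H -> Prop := fun x => f x = 0.
Definition hspan (S : H -> Prop) : H -> Prop :=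
  fun y => exists (m : nat) (a : 'I_m -> C) (v : 'I_m -> H),
    (forall j, S (v j)) /\ y = \sum_(j < m) a j *: v j.
Definition hclosure (M : H -> Prop) : H -> Prop :=
  fun x => forall e : C, 0 < e -> exists y, M y /\ dist2 x y < e.

(* H^iso(S) = closed (orthogonal) direct sum of the S^k(ker S^* ) *)
Definition Hiso (S Ss : H -> H) : H -> Prop :=
  hclosure (hspan (fun y => exists k : nat, himage (iter k S) (hkernel Ss) y)).
Definition Huni (S : H -> H) : H -> Prop :=
  fun x => forall k : nat, himage (iter k S) (fun _ => True) x.

Definition reduces (T Ts : H -> H) (M : H -> Prop) : Prop :=
  (forall x, M x -> M (T x)) /\ (forall x, M x -> M (Ts x)).

Variable n : nat.
Variables (V Vs : 'I_n -> H -> H).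

(* product of V_j^{k_j} over j in B (in increasing order of j) *)
Definition Vprod (B : {set 'I_n}) (k : 'I_n -> nat) : H -> H :=
  foldr (fun j f => iter (k j) (V j) \o f) id (enum B).

Definition HA (A : {set 'I_n}) : H -> Prop :=
  fun x => (forall i, i \in A -> Hiso (V i) (Vs i) x) /\
           (forall i, i \notin A -> Huni (V i) x).

Definition WA (A : {set 'I_n}) : H -> Prop :=
  fun x => forall m : 'I_n -> nat,
    himage (Vprod (~: A) m) (fun y => forall i, i \in A -> Vs i y = 0) x.

End Hilbert.

Definition doubly_noncommuting (R : realType) (H : lmodType R[i]) (ip : H -> H -> R[i])
  (n : nat) (z : 'I_n -> 'I_n -> R[i]) (V Vs : 'I_n -> H -> H) : Prop :=
  [/\ forall i j, i != j -> `|z i j| = 1,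
      forall i j, i != j -> z j i = (z i j)^*,
      forall i, isometry ip (V i),
      forall i, is_adjoint ip (V i) (Vs i)
    & forall i j, i != j -> forall x, Vs i (V j x) = (z i j)^* *: V j (Vs i x)].

From HB Require Import structures.
From mathcomp Require Import all_boot all_order all_algebra.
From mathcomp Require Import reals complex ring boolp.
Import Order.TTheory GRing.Theory Num.Theory.
Local Open Scope ring_scope.
Set Implicit Arguments. Unset Strict Implicit.

(* Double non-commutation makes ker V_i^* stable under every V_j with j <> i, in the
   strong sense that V_j x lies in it iff x does; the same then holds for V_i^b(D)
   whenever D is closed under scalars and strongly V_j-stable.  The images defining
   W_A can therefore be taken one factor at a time:
     W_A      = {x | V_i^* x = 0 for i in A, x in V_j^a(H) for all a and j notin A},
     V^k(W_A) = {x | x in V_i^(k_i)(ker V_i^* ) for i in A, and as above for j notin A}.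
   With P_(i,b) = V_i^b V_i^{*b}, the set V_i^b(H) is the range of P_(i,b) and
   V_i^b(ker V_i^* ) is the part of it killed by P_(i,b+1); hence every linear map
   commuting with the P_(i,b) leaves all these sets invariant.  T^* commutes with the
   self-adjoint P_(i,b) because T does, and H_A, an intersection of closed spans of
   such sets and of ranges of the V_j^a, is preserved by the bounded maps T and T^*. *)

Section LinearMap.
Variables (R : pzRingType) (H : lmodType R) (f : H -> H).
Hypothesis f_lin : linear f.

Lemma lin0 : f 0 = 0.
Proof. by have := f_lin (-1) 0 0; rewrite scaler0 addr0 scaleN1r addNr. Qed.

Lemma linD u v : f (u + v) = f u + f v.
Proof. by have := f_lin 1 u v; rewrite !scale1r. Qed.

Lemma linZ a u : f (a *: u) = a *: f u.
Proof. by have := f_lin a u 0; rewrite !addr0 lin0 addr0. Qed.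

Lemma linB u v : f (u - v) = f u - f v.
Proof. by rewrite linD -scaleN1r linZ scaleN1r. Qed.

Lemma lin_sum m (a : 'I_m -> R) (v : 'I_m -> H) :
  f (\sum_(j < m) a j *: v j) = \sum_(j < m) a j *: f (v j).
Proof. by rewrite (big_morph f linD lin0); apply: eq_bigr => j _; rewrite linZ. Qed.

End LinearMap.

Lemma linear_iter (R : pzRingType) (H : lmodType R) (f : H -> H) k :
  linear f -> linear (iter k f).
Proof. by move=> f_lin; elim: k => [|k IH] a u v //=; rewrite IH f_lin. Qed.

Lemma forall_in_cons (I : eqType) (P : I -> Prop) i s :
  (forall j, j \in i :: s -> P j) <-> P i /\ (forall j, j \in s -> P j).
Proof.
split=> [Pis | [Pi Ps] j].
  by split=> [|j js]; apply: Pis; rewrite inE ?eqxx ?js ?orbT.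
by rewrite inE => /orP[/eqP -> | /Ps].
Qed.

Section ScaleCommute.
Variables (R : pzRingType) (H : lmodType R) (f g : H -> H) (c : R).
Hypothesis g_lin : linear g.

Lemma scale_comm_iterr : (forall x, f (g x) = c *: g (f x)) ->
  forall b x, f (iter b g x) = c ^+ b *: iter b g (f x).
Proof.
move=> fg; elim=> [|b IH] x /=; first by rewrite expr0 scale1r.
by rewrite fg IH linZ // scalerA exprS.
Qed.

Lemma scale_comm_iterl : (forall x, g (f x) = c *: f (g x)) ->
  forall b x, iter b g (f x) = c ^+ b *: f (iter b g x).
Proof.
move=> gf; elim=> [|b IH] x /=; first by rewrite expr0 scale1r.
by rewrite IH linZ // gf scalerA exprSr.
Qed.

End ScaleCommute.

Section Subsets.
Variable R : realType.
Variable H : lmodType R[i].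

Definition stable (f : H -> H) (S : H -> Prop) := forall x, S (f x) <-> S x.

Definition scale_closed (S : H -> Prop) := forall (c : R[i]) x, S x -> S (c *: x).

Lemma stable_iter f S k : stable f S -> stable (iter k f) S.
Proof. by move=> fS; elim: k => [|k IH] x //=; rewrite fS. Qed.

Lemma himage_comp f g (P : H -> Prop) : himage (f \o g) P = himage f (himage g P).
Proof.
rewrite predeqE => x; split=> [[y [Py ->]] | [_ [[y [Py ->]] ->]]]; last by exists y.
by exists (g y); split; first by exists y.
Qed.

Lemma himage_meet_stable f (X D : H -> Prop) : stable f X ->
  himage f (fun y => X y /\ D y) = (fun x => X x /\ himage f D x).
Proof.
move=> fX; rewrite predeqE => x; split=> [[y [[Xy Dy] ->]] | [Xx [y [Dy ex]]]].
  by split; [apply/fX | exists y].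
by exists y; split=> //; split=> //; apply/fX; rewrite -ex.
Qed.

Lemma stable_meet f (P Q : H -> Prop) :
  stable f P -> stable f Q -> stable f (fun x => P x /\ Q x).
Proof. by move=> fP fQ x; rewrite fP fQ. Qed.

Lemma stable_forall_in (I : Type) (A : I -> Prop) f (P : I -> H -> Prop) :
  (forall i, A i -> stable f (P i)) -> stable f (fun x => forall i, A i -> P i x).
Proof. by move=> fP x; split=> Px i Ai; apply/(fP i Ai x); apply: Px. Qed.

Lemma hspan_map G (S S' : H -> Prop) : linear G ->
  (forall x, S x -> S' (G x)) -> forall x, hspan S x -> hspan S' (G x).
Proof.
move=> G_lin GS x [m [a [v [Sv ->]]]].
by exists m, a, (G \o v); split=> [j|]; [apply: GS | apply: lin_sum].
Qed.

Definition invariant (G : H -> H) (M : H -> Prop) := forall x, M x -> M (G x).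

End Subsets.

Section InnerProduct.
Variable R : realType.
Local Notation C := R[i].
Variable H : lmodType C.
Variable ip : H -> H -> C.
Hypothesis ipP : is_inner_product ip.

Lemma ipDl x y w : ip (x + y) w = ip x w + ip y w.
Proof. by case: ipP => ipL _ _ _; have := ipL 1 x y w; rewrite scale1r mul1r. Qed.

Lemma ip0l w : ip 0 w = 0.
Proof. by apply: (addrI (ip 0 w)); rewrite -ipDl !addr0. Qed.

Lemma ipZl a x w : ip (a *: x) w = a * ip x w.
Proof. by case: ipP => ipL _ _ _; rewrite -[_ *: x]addr0 ipL ip0l addr0. Qed.

Lemma ipBl x y w : ip (x - y) w = ip x w - ip y w.
Proof. by rewrite ipDl -scaleN1r ipZl mulN1r. Qed.

Lemma ipC x y : ip y x = (ip x y)^*.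
Proof. by case: ipP. Qed.

Lemma ipDr x y w : ip x (y + w) = ip x y + ip x w.
Proof. by rewrite ipC ipDl [ip x y]ipC [ip x w]ipC rmorphD. Qed.

Lemma ipZr a x y : ip x (a *: y) = a^* * ip x y.
Proof. by rewrite ipC ipZl [ip x y]ipC rmorphM. Qed.

Lemma ipBr x y w : ip x (y - w) = ip x y - ip x w.
Proof. by rewrite ipC ipBl [ip x y]ipC [ip x w]ipC rmorphB. Qed.

Lemma ip_ge0 x : 0 <= ip x x.
Proof. by case: ipP. Qed.

Lemma ip_eq0 x : ip x x = 0 -> x = 0.
Proof. by case: ipP => _ _ _; apply. Qed.

Lemma ip_conj x : (ip x x)^* = ip x x.
Proof. exact: geC0_conj (ip_ge0 x). Qed.

Lemma ip_extl x x' : (forall y, ip x y = ip x' y) -> x = x'.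
Proof.
by move=> e; apply/eqP; rewrite -subr_eq0; apply/eqP/ip_eq0; rewrite ipBl e subrr.
Qed.

Lemma ip_extr x x' : (forall y, ip y x = ip y x') -> x = x'.
Proof. by move=> e; apply: ip_extl => y; rewrite ipC e -ipC. Qed.

Lemma is_adjoint_sym A As : is_adjoint ip A As -> is_adjoint ip As A.
Proof. by move=> adjA x y; rewrite ipC -adjA -ipC. Qed.

Lemma adjoint_linear A As : is_adjoint ip A As -> linear As.
Proof.
by move=> adjA a u v; apply: ip_extr => y; rewrite -adjA ipDr ipZr !adjA -ipZr -ipDr.
Qed.

Lemma adjoint_commute G Gs Q : is_adjoint ip G Gs -> is_adjoint ip Q Q ->
  (forall x, G (Q x) = Q (G x)) -> forall x, Gs (Q x) = Q (Gs x).
Proof.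
by move=> adjG adjQ GQ x; apply: ip_extr => y; rewrite -adjG -adjQ -GQ adjG adjQ.
Qed.

Definition bounded (G : H -> H) :=
  exists2 M : C, 0 < M & forall x, ip (G x) (G x) <= M * ip x x.

Lemma bounded_opW G : bounded_op ip G -> bounded G.
Proof.
case=> _ [M GM]; exists (`|M| + 1); first exact: ltr_wpDl (normr_ge0 M) ltr01.
move=> x; apply: (le_trans (GM x)).
have Mx_ge0 : 0 <= M * ip x x := le_trans (ip_ge0 _) (GM x).
rewrite -(ger0_norm Mx_ge0) normrM (ger0_norm (ip_ge0 x)).
by rewrite ler_wpM2r ?ip_ge0 // lerDl ler01.
Qed.

Lemma bounded_adjoint G Gs : is_adjoint ip G Gs -> bounded G -> bounded Gs.
Proof.
move=> adjG [M M_gt0 GM]; exists M => // y; set u := Gs y.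
have uu_l : ip (G u) y = ip u u by rewrite adjG.
have uu_r : ip y (G u) = ip u u by rewrite ipC uu_l ip_conj.
have M_conj : M^* = M by apply/geC0_conj/ltW.
have expand : ip (G u - M *: y) (G u - M *: y) =
    ip (G u) (G u) - M * ip u u + M * (M * ip y y - ip u u).
  by rewrite ipBl !ipBr !ipZl !ipZr uu_l uu_r M_conj; ring.
have : 0 <= M * (M * ip y y - ip u u).
  by apply: le_trans (ip_ge0 (G u - M *: y)) _; rewrite expand gerDr subr_le0.
by rewrite pmulr_rge0 // subr_ge0.
Qed.

Lemma hclosure_map G (S S' : H -> Prop) : linear G -> bounded G ->
  (forall x, S x -> S' (G x)) -> forall x, hclosure ip S x -> hclosure ip S' (G x).
Proof.
move=> G_lin [M M_gt0 GM] GS x Sx e e_gt0.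
have [y [Sy xy]] := Sx (e / M) (divr_gt0 e_gt0 M_gt0).
exists (G y); split; first exact: GS.
rewrite /dist2 -linB //; apply: le_lt_trans (GM _) _.
by rewrite -ltr_pdivlMl // mulrC.
Qed.

Definition isometry_pair (W Ws : H -> H) :=
  [/\ linear W, is_adjoint ip W Ws & forall x y, ip (W x) (W y) = ip x y].

Section IsometryPair.
Variables W Ws : H -> H.
Hypothesis WP : isometry_pair W Ws.

Lemma isometry_pairK : cancel W Ws.
Proof. by case: WP => _ adjW isoW x; apply: ip_extr => y; rewrite -adjW isoW. Qed.

Lemma isometry_pair_inj : injective W.
Proof. exact: can_inj isometry_pairK. Qed.

Lemma isometry_pair_adj_linear : linear Ws.
Proof. by case: WP => _ /adjoint_linear. Qed.

Lemma range_proj_sym : is_adjoint ip (W \o Ws) (W \o Ws).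
Proof. by case: WP => _ adjW _ x y; rewrite /= adjW (is_adjoint_sym adjW). Qed.

Lemma adj_norm_eq_range w : ip (Ws w) (Ws w) = ip w w -> W (Ws w) = w.
Proof.
case: WP => _ adjW isoW norm_w; apply/eqP; rewrite eq_sym -subr_eq0; apply/eqP/ip_eq0.
have w_WWsw : ip w (W (Ws w)) = ip (Ws w) (Ws w) by rewrite ipC adjW ip_conj.
by rewrite ipBl !ipBr isoW adjW w_WWsw norm_w !subrr.
Qed.

End IsometryPair.

Lemma isometry_pair_iter W Ws k :
  isometry_pair W Ws -> isometry_pair (iter k W) (iter k Ws).
Proof.
case=> W_lin adjW isoW; split; first exact: linear_iter.
  by elim: k => [|k IH] x y //=; rewrite adjW IH -iterSr.
by elim: k => [|k IH] x y //=; rewrite isoW IH.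
Qed.

End InnerProduct.

Section DoublyNoncommuting.
Variable R : realType.
Local Notation C := R[i].
Variables (H : lmodType C) (ip : H -> H -> C).
Hypothesis ipP : is_inner_product ip.
Variables (n : nat) (z : 'I_n -> 'I_n -> C) (V Vs : 'I_n -> H -> H).
Hypothesis VP : doubly_noncommuting ip z V Vs.

Lemma V_isometry_pair i : isometry_pair ip (V i) (Vs i).
Proof. by case: VP => _ _ isoV adjV _; case: (isoV i) => -[V_lin _] Viso. Qed.

Lemma iterV_isometry_pair k i : isometry_pair ip (iter k (V i)) (iter k (Vs i)).
Proof. exact: isometry_pair_iter (V_isometry_pair i). Qed.

Lemma V_linear i : linear (V i).
Proof. by case: (V_isometry_pair i). Qed.

Lemma Vs_linear i : linear (Vs i).
Proof. exact (isometry_pair_adj_linear ipP (V_isometry_pair i)). Qed.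

Lemma iterV_linear k i : linear (iter k (V i)).
Proof. exact: linear_iter (V_linear i). Qed.

Lemma Vs_V i j : i != j -> forall x, Vs i (V j x) = (z i j)^* *: V j (Vs i x).
Proof. by case: VP => _ _ _ _; apply. Qed.

Lemma conjz_mulz i j : i != j -> (z i j)^* * z i j = 1.
Proof. by case: VP => z_norm _ _ _ _ ij; rewrite mulrC -normCK z_norm // expr1n. Qed.

Lemma V_V i j : i != j -> forall x, V j (V i x) = (z i j)^* *: V i (V j x).
Proof.
move=> ij x; have [_ _ isoV] := V_isometry_pair i.
have Vs_VjVi : Vs i (V j (V i x)) = (z i j)^* *: V j x.
  by rewrite Vs_V // (isometry_pairK ipP (V_isometry_pair i)).
(* [Vs i] preserves the norm of [V j (V i x)], which thus lies in the range of [V i]. *)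
have <- : V i (Vs i (V j (V i x))) = V j (V i x).
  apply: (adj_norm_eq_range ipP (V_isometry_pair i)).
  have [_ _ isoVj] := V_isometry_pair j.
  by rewrite Vs_VjVi (ipZl ipP) (ipZr ipP) conjCK !isoVj isoV mulrA conjz_mulz // mul1r.
by rewrite Vs_VjVi linZ //; apply: V_linear.
Qed.

Lemma stable_ker_Vs i j : i != j -> stable (V j) (hkernel (Vs i)).
Proof.
move=> ij x; rewrite /hkernel Vs_V //; split=> [|->]; last first.
  by rewrite lin0 ?scaler0 //; apply: V_linear.
move=> Vj0; apply: (isometry_pair_inj ipP (V_isometry_pair j)).
rewrite lin0; last exact: V_linear.
by rewrite -[V j _]scale1r -(conjz_mulz ij) mulrC -scalerA Vj0 scaler0.
Qed.

Lemma stable_himage_iterV i j b (D : H -> Prop) : i != j ->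
  stable (V j) D -> scale_closed D -> stable (V j) (himage (iter b (V i)) D).
Proof.
move=> ij VjD D_scale x.
have iVK := isometry_pairK ipP (iterV_isometry_pair b i).
have Vj_inj := isometry_pair_inj ipP (V_isometry_pair j).
split=> [[u [Du Vjx]] | [y [Dy ->]]]; last first.
  exists ((z i j)^* ^+ b *: V j y); split; first by apply/D_scale/VjD.
  by rewrite (linZ (iterV_linear b i)) (scale_comm_iterr (V_linear i) (V_V ij)).
have u_Vju' : u = V j ((z i j)^* ^+ b *: iter b (Vs i) x).
  by rewrite (linZ (V_linear j)) -(scale_comm_iterl (Vs_linear i) (Vs_V ij)) Vjx iVK.
set u' := _ *: iter b (Vs i) x in u_Vju'.
have Du' : D u' by apply/VjD; rewrite -u_Vju'.
exists ((z j i)^* ^+ b *: u'); split; first exact: D_scale.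
apply: Vj_inj; rewrite Vjx u_Vju' (linZ (iterV_linear b i)) (linZ (V_linear j)).
by rewrite (scale_comm_iterl (V_linear i) (V_V _)) // eq_sym.
Qed.

Definition Vprod_seq (k : 'I_n -> nat) (s : seq 'I_n) : H -> H :=
  foldr (fun j f => iter (k j) (V j) \o f) id s.

Lemma himage_Vprod_seq k s (D : 'I_n -> H -> Prop) (S : H -> Prop) : uniq s ->
  (forall i j, i != j -> stable (V j) (D i)) -> (forall i, scale_closed (D i)) ->
  (forall j, j \in s -> stable (V j) S) ->
  himage (Vprod_seq k s) (fun y => S y /\ forall j, j \in s -> D j y) =
  (fun x => S x /\ forall j, j \in s -> himage (iter (k j) (V j)) (D j) x).
Proof.
move=> + VD D_scale; elim: s S => [|j s IH] S /=.
  move=> _ _; rewrite predeqE => x.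
  by split=> [[y [[Sy _] ->]] | [Sx _]]; last exists x.
case/andP=> j_s s_uniq VS.
have VSs j' : j' \in s -> stable (V j') S by move=> js'; apply: VS; rewrite inE js' orbT.
have j'_neq_j j' : j' \in s -> j' != j by move=> js'; apply: contraTneq js' => ->.
have -> : (fun y => S y /\ forall j0, j0 \in j :: s -> D j0 y) =
    (fun y => (S y /\ D j y) /\ forall j0, j0 \in s -> D j0 y).
  by rewrite predeqE => y; rewrite forall_in_cons; tauto.
rewrite himage_comp IH // => [|j' js']; last first.
  by apply: stable_meet (VSs j' js') (VD _ _ _); rewrite eq_sym j'_neq_j.
have -> : (fun x => (S x /\ D j x) /\
      forall j0, j0 \in s -> himage (iter (k j0) (V j0)) (D j0) x) =
    (fun x => (S x /\ forall j0, j0 \in s -> himage (iter (k j0) (V j0)) (D j0) x)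
      /\ D j x).
  by rewrite predeqE => x; tauto.
rewrite himage_meet_stable; last first.
  apply/stable_iter/stable_meet; first exact/VS/mem_head.
  apply: stable_forall_in => j0 j0s.
  have j0_neq_j := j'_neq_j j0 j0s.
  exact: stable_himage_iterV j0_neq_j (VD _ _ j0_neq_j) (D_scale j0).
by rewrite predeqE => x; rewrite forall_in_cons; tauto.
Qed.

Lemma stable_Huni i j : i != j -> stable (V j) (Huni (V i)).
Proof. by move=> ij x; split=> Ux a; have := Ux a; rewrite stable_himage_iterV. Qed.

Lemma WAE A : WA V Vs A =
  (fun x => (forall i, i \in A -> Vs i x = 0) /\ forall j, j \notin A -> Huni (V j) x).
Proof.
set K := fun y => forall i, i \in A -> Vs i y = 0.
have VK j : j \in enum (~: A) -> stable (V j) K.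
  rewrite mem_enum inE => jA; apply: stable_forall_in => i iA.
  by apply: stable_ker_Vs; apply: contraNneq jA => <-.
have imageE m : himage (Vprod V (~: A) m) K = (fun x => K x /\
    forall j, j \in enum (~: A) -> himage (iter (m j) (V j)) (fun _ => True) x).
  rewrite -(himage_Vprod_seq _ (enum_uniq _) _ _ VK) //.
  by congr himage; rewrite predeqE; tauto.
rewrite predeqE => x; split=> [Wx | [Kx Ux] m]; last first.
  by rewrite imageE; split=> // j; rewrite mem_enum inE => /Ux.
split; first by have := Wx (fun _ => 0%N); rewrite imageE => -[].
move=> j jA a; have := Wx (fun _ => a); rewrite imageE => -[_]; apply.
by rewrite mem_enum inE.
Qed.

Lemma himage_Vprod_WA A k : himage (Vprod V A k) (WA V Vs A) =
  (fun x => (forall j, j \notin A -> Huni (V j) x) /\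
            forall i, i \in A -> himage (iter (k i) (V i)) (hkernel (Vs i)) x).
Proof.
set U := fun x => forall j, j \notin A -> Huni (V j) x.
have VU j : j \in enum A -> stable (V j) U.
  rewrite mem_enum => jA; apply: stable_forall_in => i iA.
  by apply: stable_Huni; apply: contraNneq iA => ->.
have ker_scale i : scale_closed (hkernel (Vs i)).
  by move=> c y Vsy; rewrite /hkernel (linZ (Vs_linear i)) Vsy scaler0.
transitivity (himage (Vprod_seq k (enum A))
    (fun y => U y /\ forall i, i \in enum A -> hkernel (Vs i) y)).
  rewrite WAE; congr himage; rewrite predeqE => y.
  split=> [[Ky Uy] | [Uy Ky]]; split=> // i; first by rewrite mem_enum; apply: Ky.
  by move=> iA; apply: Ky; rewrite mem_enum.
rewrite (himage_Vprod_seq _ (enum_uniq A) (@stable_ker_Vs) ker_scale VU) predeqE => x.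
by split=> -[Ux Kx]; split=> // i iA; apply: Kx; move: iA; rewrite mem_enum.
Qed.

Section ProjectionCommutant.
Variable G : H -> H.
Hypothesis G_lin : linear G.
Hypothesis G_comm : forall i k, (1 <= k)%N -> forall x,
  G (iter k (V i) (iter k (Vs i) x)) = iter k (V i) (iter k (Vs i) (G x)).

Lemma range_proj_G_iterV i b y :
  iter b (V i) (iter b (Vs i) (G (iter b (V i) y))) = G (iter b (V i) y).
Proof.
by case: b => [|b] //; rewrite -G_comm // (isometry_pairK ipP (iterV_isometry_pair _ i)).
Qed.

Lemma invariant_range_iterV i b : invariant G (himage (iter b (V i)) (fun _ => True)).
Proof. by move=> _ [y [_ ->]]; rewrite -range_proj_G_iterV; eexists. Qed.

Lemma invariant_iterV_ker i b : invariant G (himage (iter b (V i)) (hkernel (Vs i))).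
Proof.
move=> _ [y [Vsy ->]]; rewrite -range_proj_G_iterV; eexists; split; last reflexivity.
change (iter b.+1 (Vs i) (G (iter b (V i) y)) = 0).
apply: (isometry_pair_inj ipP (iterV_isometry_pair b.+1 i)).
rewrite -G_comm //= (isometry_pairK ipP (iterV_isometry_pair b i)) Vsy.
by rewrite (lin0 (iterV_linear b i)) (lin0 (V_linear i)) (lin0 G_lin).
Qed.

Lemma invariant_ker_Vs i : invariant G (hkernel (Vs i)).
Proof.
move=> x Vsx.
by have [y [Vsy ->]] := invariant_iterV_ker (b := 0) (ex_intro _ x (conj Vsx erefl)).
Qed.

Lemma invariant_Huni i : invariant G (Huni (V i)).
Proof. by move=> x Ux b; apply: invariant_range_iterV. Qed.

Lemma invariant_WA A : invariant G (WA V Vs A).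
Proof.
rewrite WAE => x [Kx Ux].
by split=> [i /Kx | j /Ux]; [apply: invariant_ker_Vs | apply: invariant_Huni].
Qed.

Lemma invariant_himage_Vprod_WA A k : invariant G (himage (Vprod V A k) (WA V Vs A)).
Proof.
rewrite himage_Vprod_WA => x [Ux Kx].
by split=> [j /Ux | i /Kx]; [apply: invariant_Huni | apply: invariant_iterV_ker].
Qed.

Lemma invariant_HA A : bounded ip G -> invariant G (HA ip V Vs A).
Proof.
move=> G_bnd x [Iso Uni]; split=> [i iA | j /Uni]; last exact: invariant_Huni.
apply: hclosure_map G_lin G_bnd _ _ (Iso i iA).
by apply: hspan_map G_lin _ => y [b yb]; exists b; apply: invariant_iterV_ker.
Qed.

End ProjectionCommutant.

End DoublyNoncommuting.

Theorem proposition3p10 (R : realType) (H : lmodType R[i]) (ip : H -> H -> R[i])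
  (n : nat) (z : 'I_n -> 'I_n -> R[i]) (V Vs : 'I_n -> H -> H) (T Ts : H -> H) :
  is_hilbert ip ->
  doubly_noncommuting ip z V Vs ->
  bounded_op ip T -> is_adjoint ip T Ts ->
  (forall (i : 'I_n) (k : nat), (1 <= k)%N -> forall x,
      T (iter k (V i) (iter k (Vs i) x)) = iter k (V i) (iter k (Vs i) (T x))) ->
  forall A : {set 'I_n},
    (forall k : 'I_n -> nat, reduces T Ts (himage (Vprod V A k) (WA V Vs A))) /\
    reduces T Ts (WA V Vs A) /\
    reduces T Ts (HA ip V Vs A).
Proof.
move=> [ipP _] VP T_op adjT T_comm A.
have T_lin : linear T by case: T_op.
have T_bnd := bounded_opW ipP T_op.
have Ts_lin := adjoint_linear ipP adjT.
have Ts_bnd := bounded_adjoint ipP adjT T_bnd.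
have Ts_comm i k (k_gt0 : (1 <= k)%N) := adjoint_commute ipP adjT
  (range_proj_sym ipP (iterV_isometry_pair VP k i)) (T_comm i k k_gt0).
split; [move=> k | split]; split=> x.
- exact: (invariant_himage_Vprod_WA ipP VP T_lin T_comm).
- exact: (invariant_himage_Vprod_WA ipP VP Ts_lin Ts_comm).
- exact: (invariant_WA ipP VP T_lin T_comm).
- exact: (invariant_WA ipP VP Ts_lin Ts_comm).
- exact: (invariant_HA ipP VP T_lin T_comm T_bnd).
- exact: (invariant_HA ipP VP Ts_lin Ts_comm Ts_bnd).
Qed.
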